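(* Let $r\ge1$ and $n_1,m_1,\ldots,n_r,m_r\ge1$ be integers with $n_1+\cdots+n_r=m_1+\cdots+m_r$, let $\mathbf{S}=(1^{n_1},\ast^{m_1},\ldots,1^{n_r},\ast^{m_r})$, and let $i=\min\{n_1,m_1,\ldots,n_r,m_r\}$. Then \[ |NC_2(\mathbf{S})|\ge(1+i)^{r-1}. \]
   Context: $1^{k}$ denotes $k$ consecutive entries equal to $1$ (similarly $\ast^k$), so $\mathbf{S}$ is a string of length $N=2(n_1+\cdots+n_r)$ in the symbols $1,\ast$ with $r$ runs. $NC_2(\mathbf{S})$ is the set of non-crossing pairings of $\{1,\ldots,N\}$ in which every pair joins a position carrying $1$ with a position carrying $\ast$ in $\mathbf{S}$. *)

From mathcomp Require Import all_boot all_order.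
Set Implicit Arguments. Unset Strict Implicit. Unset Printing Implicit Defensive.

(* A string in the symbols 1 and * is a seq bool: true = 1, false = *.
   Positions are 0-based: 'I_(size S) stands for {1,...,N}. *)

Definition runString (r : nat) (n m : 'I_r -> nat) : seq bool :=
  flatten [seq nseq (n k) true ++ nseq (m k) false | k <- enum 'I_r].

(* A pairing of {0..N-1} is a fixed-point-free involution p; the pairs are
   {x, p x}. *)
Definition is_pairing (N : nat) (p : {ffun 'I_N -> 'I_N}) : bool :=
  [forall x, (p (p x) == x) && (p x != x)].

Definition is_noncrossing (N : nat) (p : {ffun 'I_N -> 'I_N}) : bool :=
  [forall a : 'I_N, forall b : 'I_N,
     ~~ [&& (a < b)%N, (b < p a)%N, (p a < p b)%N & (p b != a)]].

Definition respects (S : seq bool) (p : {ffun 'I_(size S) -> 'I_(size S)}) : bool :=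
  [forall x, nth false S (p x) != nth false S x].

Arguments respects : clear implicits.

Definition NC2 (S : seq bool) : {set {ffun 'I_(size S) -> 'I_(size S)}} :=
  [set p | [&& is_pairing p, is_noncrossing p & respects S p]].

(* minimum of a nonempty list (head 0 for the empty list) *)
Definition minseq (s : seq nat) : nat := foldr minn (head 0%N s) s.

Definition imin (r : nat) (n m : 'I_r -> nat) : nat :=
  minseq (flatten [seq [:: n k; m k] | k <- enum 'I_r]).

From mathcomp Require Import all_boot all_order zify.
Set Implicit Arguments. Unset Strict Implicit. Unset Printing Implicit Defensive.

(* Take three consecutive runs c^x, (~~c)^b, c^y
   with b <= x or b <= y, and let S' be the string in which they are replaced by
   the single run c^(x+y-b). A non-crossing pairing of S' extends to one of S by
   matching the middle run, in two nested blocks, against the last s letters of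
   c^x and the first b-s letters of c^y. At least i+1 values of s are admissible
   and the extension is injective in (s, pairing), so |NC2 S| >= (1+i)|NC2 S'|.
   S' has two runs fewer and all its runs are still at least i long; with one
   pair of runs c^a (~~c)^a left there is a non-crossing pairing. *)

(* Elements of [NC2 S] as functions on [nat], of which only the values below
   [size S] matter: this avoids casts between ordinal types of varying size. *)
Definition nc_pairing (S : seq bool) (g : nat -> nat) : Prop :=
  [/\ forall z, z < size S -> g z < size S,
      forall z, z < size S -> g (g z) = z,
      forall z, z < size S -> g z <> z,
      forall z, z < size S -> nth false S (g z) <> nth false S z &
      forall a b, a < size S -> b < size S -> a < b -> b < g a -> g a < g b -> False].

Definition fun_of_pairing N (p : {ffun 'I_N -> 'I_N}) (z : nat) : nat :=
  if insub z is Some o then val (p o) else z.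

Definition pairing_of_fun N (g : nat -> nat) : {ffun 'I_N -> 'I_N} :=
  [ffun o : 'I_N => insubd o (g o)].

Lemma fun_of_pairingE N (p : {ffun 'I_N -> 'I_N}) (o : 'I_N) : fun_of_pairing p o = p o.
Proof. by rewrite /fun_of_pairing valK. Qed.

Lemma fun_of_pairing_inj N (p1 p2 : {ffun 'I_N -> 'I_N}) :
  (forall z, z < N -> fun_of_pairing p1 z = fun_of_pairing p2 z) -> p1 = p2.
Proof.
move=> e; apply/ffunP => o; apply: val_inj.
by have := e o (ltn_ord o); rewrite !fun_of_pairingE.
Qed.

Lemma val_pairing_of_fun N (g : nat -> nat) (o : 'I_N) :
  g o < N -> val (pairing_of_fun N g o) = g o.
Proof. by move=> h; rewrite ffunE insubdK. Qed.

Lemma pairing_of_funK N (g : nat -> nat) z :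
  z < N -> g z < N -> fun_of_pairing (pairing_of_fun N g) z = g z.
Proof.
by move=> hz; rewrite -[z]/(val (Ordinal hz)) fun_of_pairingE; exact: val_pairing_of_fun.
Qed.

Lemma NC2_nc_pairing S p : p \in NC2 S -> nc_pairing S (fun_of_pairing p).
Proof.
rewrite inE => /and3P[/forallP p_inv /forallP p_nc /forallP p_resp].
have pE z (hz : z < size S) : fun_of_pairing p z = p (Ordinal hz).
  by rewrite -(fun_of_pairingE p (Ordinal hz)).
split.
- by move=> z hz; rewrite pE.
- move=> z hz; rewrite (pE z hz) fun_of_pairingE.
  by case/andP: (p_inv (Ordinal hz)) => /eqP ->.
- move=> z hz; rewrite pE => e; case/andP: (p_inv (Ordinal hz)) => _ /eqP; apply.
  exact: val_inj.
- by move=> z hz; rewrite pE; apply/eqP; exact: p_resp.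
- move=> a b ha hb hab; rewrite pE (pE b hb) => h1 h2.
  move/forallP: (p_nc (Ordinal ha)) => /(_ (Ordinal hb)) /negP; apply.
  rewrite /= hab h1 h2 /=; apply/eqP => e; move: h2; rewrite e /= => h3.
  by have := ltn_trans hab (ltn_trans h1 h3); rewrite ltnn.
Qed.

Lemma nc_pairing_NC2 S g : nc_pairing S g -> pairing_of_fun (size S) g \in NC2 S.
Proof.
case=> g_lt g_inv g_neq g_resp g_nc.
have gE (o : 'I_(size S)) : val (pairing_of_fun (size S) g o) = g o.
  by rewrite val_pairing_of_fun // g_lt.
rewrite inE; apply/and3P; split.
- apply/forallP => o; apply/andP; split.
    by apply/eqP; apply: val_inj; rewrite !gE g_inv.
  by apply/eqP => e; apply: (g_neq o) => //; rewrite -gE e.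
- apply/forallP => a; apply/forallP => b; apply/negP => /and4P[h1 h2 h3 _].
  rewrite !gE in h2 h3; exact: (g_nc a b).
- by apply/forallP => o; rewrite gE; apply/eqP; exact: g_resp.
Qed.

Definition shift k w y := if y < k then y else y + w.
Definition unshift k w z := if z < k then z else z - w.

Lemma unshiftK k w : cancel (shift k w) (unshift k w).
Proof.
move=> y; rewrite /shift /unshift; case: (ltnP y k) => h; first by rewrite h.
case: ltnP => h'; lia.
Qed.

Lemma shift_unshift k w z : ~~ (k <= z < k + w) -> shift k w (unshift k w z) = z.
Proof. by rewrite /shift /unshift; case: (ltnP z k) => h; [rewrite h | case: ifP; lia]. Qed.

Lemma ltn_shift k w a b : (shift k w a < shift k w b) = (a < b).
Proof. rewrite /shift; case: (ltnP a k); case: (ltnP b k) => h1 h2; lia. Qed.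

Lemma shift_ltn k w y n : y < n -> shift k w y < n + w.
Proof. by rewrite /shift; case: ifP; lia. Qed.

Lemma shift_notin_gap k w y : ~~ (k <= shift k w y < k + w).
Proof. rewrite /shift; case: (ltnP y k) => h; lia. Qed.

Definition insert_at (k : nat) (W S : seq bool) := take k S ++ W ++ drop k S.

Definition insert_pairing k w (q g : nat -> nat) z :=
  if z < k then shift k w (g z)
  else if z < k + w then k + q (z - k)
  else shift k w (g (z - w)).

Lemma insert_pairing_gap k w q g z :
  k <= z < k + w -> insert_pairing k w q g z = k + q (z - k).
Proof. by move=> /andP[h1 h2]; rewrite /insert_pairing ltnNge h1 /= h2. Qed.

Lemma insert_pairing_shift k w q g y :
  insert_pairing k w q g (shift k w y) = shift k w (g y).
Proof.
rewrite /insert_pairing /shift; case: (ltnP y k) => h; first by rewrite h.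
rewrite ltnNge (leq_trans h (leq_addr _ _)) /=.
have -> : (y + w < k + w) = false by lia.
by rewrite addnK.
Qed.

Section Insertion.

Variables (S W : seq bool) (k : nat) (g q : nat -> nat).
Hypothesis (le_k_S : k <= size S) (nc_g : nc_pairing S g) (nc_q : nc_pairing W q).

Local Notation w := (size W).
Local Notation SW := (insert_at k W S).
Local Notation gq := (insert_pairing k w q g).

Lemma size_insert_at : size SW = size S + w.
Proof. rewrite !size_cat (size_takel le_k_S) size_drop; lia. Qed.

Lemma nth_insert_shift y : nth false SW (shift k w y) = nth false S y.
Proof.
rewrite /shift; case: ltnP => hy.
  by rewrite nth_cat (size_takel le_k_S) hy nth_take.
rewrite nth_cat (size_takel le_k_S) ltnNge (leq_trans hy (leq_addr _ _)) /=.
rewrite nth_cat ltnNge -addnBAC // leq_addl /= nth_drop; congr nth; lia.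
Qed.

Lemma nth_insert_gap z : k <= z < k + w -> nth false SW z = nth false W (z - k).
Proof.
move=> /andP[h1 h2]; rewrite nth_cat (size_takel le_k_S) ltnNge h1 /= nth_cat.
by have -> : z - k < w by lia.
Qed.

Variant insert_spec z : Prop :=
  | InsertGap of k <= z < k + w
  | InsertShift y of y < size S & z = shift k w y.

Lemma insertP z : z < size SW -> insert_spec z.
Proof.
rewrite size_insert_at => hz; case: (boolP (k <= z < k + w)) => hgap.
  exact: InsertGap.
apply: (InsertShift _ (esym (shift_unshift hgap))).
by move: hz hgap; rewrite /unshift; case: ifP; lia.
Qed.

Lemma insert_pairing_gap_lt z : k <= z < k + w -> k <= gq z < k + w.
Proof.
case: nc_q => q_lt _ _ _ _ hz; rewrite insert_pairing_gap //.
have := q_lt (z - k); lia.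
Qed.

Lemma insert_pairing_noncrossing a b : a < size SW -> b < size SW ->
  a < b -> b < gq a -> gq a < gq b -> False.
Proof.
case: nc_g => _ _ _ _ g_nc; case: nc_q => _ _ _ _ q_nc.
move=> /insertP[ha | ya hya ->] /insertP[hb | yb hyb ->].
- rewrite !insert_pairing_gap // => h1 h2 h3.
  apply: (q_nc (a - k) (b - k)); lia.
- have := insert_pairing_gap_lt ha; have := shift_notin_gap k w yb; lia.
- rewrite insert_pairing_shift; have := insert_pairing_gap_lt hb.
  have := shift_notin_gap k w (g ya); lia.
- by rewrite !insert_pairing_shift !ltn_shift; exact: g_nc.
Qed.

Lemma insert_pairing_nc : nc_pairing SW gq.
Proof.
case: (nc_g) => g_lt g_inv g_neq g_resp _; case: (nc_q) => q_lt q_inv q_neq q_resp _.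
split; last exact: insert_pairing_noncrossing.
- move=> z /insertP[hz | y hy ->].
    by have := insert_pairing_gap_lt hz; rewrite size_insert_at; lia.
  by rewrite insert_pairing_shift size_insert_at shift_ltn // g_lt.
- move=> z /insertP[hz | y hy ->]; last by rewrite !insert_pairing_shift g_inv.
  rewrite (insert_pairing_gap q g (insert_pairing_gap_lt hz)) insert_pairing_gap //.
  rewrite addKn q_inv; lia.
- move=> z /insertP[hz | y hy ->].
    rewrite insert_pairing_gap // => e; apply: (q_neq (z - k)); lia.
  by rewrite insert_pairing_shift => /(can_inj (@unshiftK k w)); exact: g_neq.
- move=> z /insertP[hz | y hy ->]; last first.
    by rewrite insert_pairing_shift !nth_insert_shift; exact: g_resp.
  rewrite !nth_insert_gap ?insert_pairing_gap_lt // insert_pairing_gap // addKn.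
  apply: q_resp; lia.
Qed.

End Insertion.

Definition nested (c : bool) u := nseq u c ++ nseq u (~~ c).
Definition mirror u z := (u + u) - z.+1.

Lemma size_nested c u : size (nested c u) = u + u.
Proof. by rewrite size_cat !size_nseq. Qed.

Lemma nth_nested c u z : z < u + u -> nth false (nested c u) z = if z < u then c else ~~ c.
Proof.
move=> hz; rewrite nth_cat size_nseq; case: ltnP => h; rewrite nth_nseq ?h //.
by have -> : z - u < u by lia.
Qed.

Lemma mirror_nc c u : nc_pairing (nested c u) (mirror u).
Proof.
rewrite /mirror; split; rewrite ?size_nested; try by move=> *; lia.
move=> z hz; rewrite !nth_nested; try lia.
have -> : (u + u - z.+1 < u) = (u <= z) by lia.
by rewrite leqNgt; case: (z < u); case: c.
Qed.

Definition gadget (c : bool) s b := nested c s ++ nested (~~ c) (b - s).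

Definition gadget_pairing s b :=
  insert_pairing (s + s) ((b - s) + (b - s)) (mirror (b - s)) (mirror s).

Lemma gadgetE c s b : s <= b -> gadget c s b = nseq s c ++ nseq b (~~ c) ++ nseq (b - s) c.
Proof.
move=> hs; rewrite /gadget /nested negbK -!catA; congr (_ ++ _).
by rewrite catA -nseqD subnKC.
Qed.

Lemma size_gadget c s b : s <= b -> size (gadget c s b) = b + b.
Proof. by move=> hs; rewrite size_cat !size_nested; lia. Qed.

Lemma gadget_nc c s b : nc_pairing (gadget c s b) (gadget_pairing s b).
Proof.
have -> : gadget c s b = insert_at (s + s) (nested (~~ c) (b - s)) (nested c s).
  by rewrite /insert_at take_oversize ?drop_oversize ?cats0 ?size_nested.
rewrite /gadget_pairing -(size_nested (~~ c) (b - s)).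
by apply: insert_pairing_nc; rewrite ?size_nested //; exact: mirror_nc.
Qed.

Lemma gadget_pairing_middle s b j : j < b -> (gadget_pairing s b (s + j) < s) = (j < s).
Proof.
move=> hj; rewrite /gadget_pairing /insert_pairing /mirror.
case: (ltnP (s + j) (s + s)) => h1.
  rewrite /shift; have -> : s + s - (s + j).+1 < s + s by lia.
  have -> : j < s by lia.
  lia.
have -> : s + j < s + s + (b - s + (b - s)) by lia.
have -> : (j < s) = false by lia.
lia.
Qed.

Section Splice.

Variables (c : bool) (U V : seq bool) (x y b s : nat).
Hypotheses (le_s_x : s <= x) (le_s_b : s <= b).

Local Notation S := (U ++ nseq x c ++ nseq b (~~ c) ++ nseq y c ++ V).
Local Notation S' := (U ++ nseq (x + y - b) c ++ V).
Local Notation k := (size U + (x - s)).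

Definition splice g := insert_pairing (size U + (x - s)) (b + b) (gadget_pairing s b) g.

Lemma splice_middle g j : j < b -> (splice g (size U + x + j) < size U + x) = (j < s).
Proof.
move=> hj; rewrite /splice insert_pairing_gap; last lia.
rewrite -(gadget_pairing_middle s hj).
have -> : size U + x + j - k = s + j by lia.
have -> : size U + x = k + s by lia.
by rewrite ltn_add2l.
Qed.

Lemma unsplice g z : unshift k (b + b) (splice g (shift k (b + b) z)) = g z.
Proof. by rewrite /splice insert_pairing_shift unshiftK. Qed.

Hypothesis le_b_ys : b <= y + s.

Lemma le_splice_point : k <= size S'.
Proof. rewrite !size_cat size_nseq; lia. Qed.

Lemma insert_gadget : S = insert_at k (gadget c s b) S'.
Proof.
have eS' : S' = (U ++ nseq (x - s) c) ++ (nseq (y + s - b) c ++ V).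
  rewrite -catA; congr (U ++ _); rewrite catA -nseqD; congr (nseq _ _ ++ _); lia.
have ek : size (U ++ nseq (x - s) c) = k by rewrite size_cat size_nseq.
rewrite /insert_at eS' -ek take_size_cat // drop_size_cat // gadgetE // -!catA.
congr (U ++ _); rewrite -{1}(subnK le_s_x) nseqD -!catA; do 3 congr (_ ++ _).
by rewrite catA -nseqD; congr (nseq _ _ ++ _); lia.
Qed.

Lemma splice_nc g : nc_pairing S' g -> nc_pairing S (splice g).
Proof.
move=> nc_g; rewrite insert_gadget /splice -(size_gadget c le_s_b).
exact: insert_pairing_nc le_splice_point nc_g (gadget_nc c s b).
Qed.


Lemma shift_splice_ltn z : z < size S' -> shift k (b + b) z < size S.
Proof.
rewrite insert_gadget size_insert_at ?le_splice_point // size_gadget //.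
exact: shift_ltn.
Qed.

End Splice.

Section MergeRuns.

Variables (c : bool) (U V : seq bool) (x y b : nat).

Local Notation S := (U ++ nseq x c ++ nseq b (~~ c) ++ nseq y c ++ V).
Local Notation S' := (U ++ nseq (x + y - b) c ++ V).

Lemma splice_injl s1 s2 g1 g2 : s1 <= x -> s1 <= b -> s2 <= x -> s2 <= b ->
  (forall z, z < size S -> splice U x b s1 g1 z = splice U x b s2 g2 z) -> s1 = s2.
Proof.
(* the middle letter of index [minn s1 s2] is paired leftwards for exactly one of them *)
move=> h1x h1b h2x h2b e; apply/eqP; apply/negPn/negP => ne.
have hj : minn s1 s2 < b by lia.
have hz : size U + x + minn s1 s2 < size S by rewrite !size_cat !size_nseq; lia.
have := congr1 (fun v => v < size U + x) (e _ hz); rewrite /= !splice_middle //; lia.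
Qed.

Lemma splice_injr s g1 g2 : s <= x -> s <= b -> b <= y + s ->
  (forall z, z < size S -> splice U x b s g1 z = splice U x b s g2 z) ->
  forall z, z < size S' -> g1 z = g2 z.
Proof.
move=> hx hb hy e z hz.
by rewrite -(unsplice U x b s g1) -(unsplice U x b s g2) e // shift_splice_ltn.
Qed.

Lemma card_NC2_splice lo i :
  (forall t, t <= i -> [/\ lo + t <= x, lo + t <= b & b <= y + (lo + t)]) ->
  i.+1 * #|NC2 S'| <= #|NC2 S|.
Proof.
move=> adm.
pose F (u : 'I_i.+1 * {ffun 'I_(size S') -> 'I_(size S')}) :=
  pairing_of_fun (size S) (splice U x b (lo + u.1) (fun_of_pairing u.2)).
have ncF (u : 'I_i.+1 * _) : u \in setX [set: 'I_i.+1] (NC2 S') ->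
    nc_pairing S (splice U x b (lo + u.1) (fun_of_pairing u.2)).
  case: u => t p; rewrite inE /= => /andP[_ hp].
  have [hx hb hy] := adm t (ltn_ord t).
  exact/(splice_nc hx hb hy)/NC2_nc_pairing.
rewrite -[i.+1]card_ord -cardsT -cardsX -(card_in_imset (f := F)).
  apply: subset_leq_card; apply/subsetP => _ /imsetP[u hu ->].
  exact/nc_pairing_NC2/ncF.
move=> [t1 p1] [t2 p2] hu1 hu2 eF.
have e z : z < size S -> splice U x b (lo + t1) (fun_of_pairing p1) z =
                         splice U x b (lo + t2) (fun_of_pairing p2) z.
  move=> hz; case: (ncF _ hu1) => lt1 _ _ _ _; case: (ncF _ hu2) => lt2 _ _ _ _.
  by rewrite -(pairing_of_funK hz (lt1 z hz)) -(pairing_of_funK hz (lt2 z hz)) -/(F _) eF.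
have [h1x h1b h1y] := adm t1 (ltn_ord t1).
have [h2x h2b _] := adm t2 (ltn_ord t2).
have et : t1 = t2.
  by apply/ord_inj/eqP; rewrite -(eqn_add2l lo) (splice_injl h1x h1b h2x h2b e).
subst t2; congr (_, _); apply: fun_of_pairing_inj => z.
exact: (splice_injr h1x h1b h1y e).
Qed.

Lemma card_NC2_merge_runs i : i <= x -> i <= b -> i <= y -> (b <= x) || (b <= y) ->
  i.+1 * #|NC2 S'| <= #|NC2 S|.
Proof.
move=> hx hb hy hbxy; case: (leqP b y) => hby.
  by apply: (card_NC2_splice (lo := 0)) => t ht; split; lia.
by apply: (card_NC2_splice (lo := b - i)) => t ht; split; lia.
Qed.

End MergeRuns.

Fixpoint alt_runs (c : bool) (l : seq nat) : seq bool :=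
  if l is x :: l' then nseq x c ++ alt_runs (~~ c) l' else [::].

Lemma card_NC2_alt_runs r l i : size l = r.+1 + r.+1 -> all (leq i) l ->
  count id (alt_runs true l) = count negb (alt_runs true l) ->
  (1 + i) ^ r <= #|NC2 (alt_runs true l)|.
Proof.
elim: r l => [|r IH] [|x1 [|x2 [|x3 [|x4 l]]]] //= hl; try by exfalso; lia.
- rewrite cats0 !count_cat !count_nseq /= => _ ex; have {ex}<- : x1 = x2 by lia.
  rewrite expn0 card_gt0; apply/set0Pn; exists (pairing_of_fun _ (mirror x1)).
  exact: (nc_pairing_NC2 (mirror_nc true x1)).
- move=> /and5P[h1 h2 h3 h4 hl'] hc; rewrite expnS.
  case: (leqP x2 x3) => h23.
    apply: leq_trans (card_NC2_merge_runs true [::] _ h1 h2 h3 _); last by rewrite h23 orbT.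
    rewrite leq_mul2l; apply/orP; right; apply: (IH ((x1 + x3 - x2) :: x4 :: l)) => /=.
    + lia.
    + by rewrite h4 hl' andbT; lia.
    + by move: hc; rewrite /= !count_cat !count_nseq /=; lia.
  apply: leq_trans (card_NC2_merge_runs false (nseq x1 true) _ h2 h3 h4 _); last first.
    by rewrite ltnW.
  rewrite leq_mul2l; apply/orP; right; apply: (IH (x1 :: (x2 + x4 - x3) :: l)) => /=.
  + lia.
  + by rewrite h1 hl' andbT; lia.
  + by move: hc; rewrite /= !count_cat !count_nseq /=; lia.
Qed.

Section RunPairs.

Variables (T : Type) (a b : T -> nat).

Local Notation pairs s := (flatten [seq [:: a k; b k] | k <- s]).
Local Notation runs s := (flatten [seq nseq (a k) true ++ nseq (b k) false | k <- s]).

Lemma alt_runs_pairs s : alt_runs true (pairs s) = runs s.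
Proof. by elim: s => //= k s ->; rewrite catA. Qed.

Lemma size_pairs s : size (pairs s) = size s + size s.
Proof. elim: s => //= k s ->; lia. Qed.

Lemma count_runs s :
  count id (runs s) = \sum_(k <- s) a k /\ count negb (runs s) = \sum_(k <- s) b k.
Proof.
elim: s => [|k s [IHa IHb]]; first by rewrite !big_nil.
by rewrite /= !count_cat !count_nseq /= !big_cons IHa IHb; split; lia.
Qed.

End RunPairs.

Lemma all_geq_foldr_minn (l : seq nat) d : all (leq (foldr minn d l)) l.
Proof.
elim: l => //= x l IH; rewrite geq_minl /=.
by apply/allP => z hz; apply: leq_trans (geq_minr _ _) _; exact: (allP IH).
Qed.

Theorem proposition3p2 (r : nat) (n m : 'I_r -> nat)
  (hr : (1 <= r)%N)
  (hn : forall k, (1 <= n k)%N) (hm : forall k, (1 <= m k)%N)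
  (hsum : (\sum_(k < r) n k)%N = (\sum_(k < r) m k)%N) :
  ((1 + imin n m) ^ (r - 1) <= #|NC2 (runString n m)|)%N.
Proof.
case: r hr n m hn hm hsum => // r _ n m _ _ hsum.
rewrite /runString -alt_runs_pairs subn1 /=.
apply: card_NC2_alt_runs; first by rewrite size_pairs size_enum_ord.
  exact: all_geq_foldr_minn.
by rewrite alt_runs_pairs; have [-> ->] := count_runs n m (enum 'I_r.+1); rewrite !big_enum.
Qed.
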